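(* Any discrete quasigroup, and in particular any discrete group, is approximable by finite quasigroups.
   Context: A quasigroup is a set $A$ with a binary operation $\circ$ such that for all $a,b\in A$ each of the equations $a\circ x=b$ and $x\circ a=b$ has a unique solution. $A$ carries the discrete topology. Approximability of a topological algebra $(A,\circ)$ by a class $\mathcal K$ of finite algebras: for a compact $C\subseteq A$, a finite cover $\mathcal U$ of $C$ by open sets, and a finite algebra $(H,\odot)$, a map $j:H\to A$ gives a $(C,\mathcal U)$-approximation if (i) every $U\in\mathcal U$ with $U\cap C\ne\emptyset$ contains a point of $j(H)$, and (ii) for all $x,y\in H$ with $j(x),j(y),j(x)\circ j(y)\in C$ there is $U\in\mathcal U$ containing both $j(x\odot y)$ and $j(x)\circ j(y)$; $A$ is approximable by $\mathcal K$ if for every compact $C$ and finite open cover $\mathcal U$ of $C$ there is a $(C,\mathcal U)$-approximation $(H,j)$ with $H\in\mathcal K$ and $j$ injective. *)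

From HB Require Import structures.
From mathcomp Require Import all_boot all_order all_algebra.
From mathcomp Require Import all_classical all_reals all_analysis.
Set Implicit Arguments. Unset Strict Implicit. Unset Printing Implicit Defensive.
Local Open Scope classical_set_scope.

Definition is_quasigroup (A : Type) (op : A -> A -> A) : Prop :=
  forall a b : A, (exists! x, op a x = b) /\ (exists! x, op x a = b).

Definition finite_open_cover (T : topologicalType) (C : set T) (U : seq (set T)) : Prop :=
  (forall V, V \in U -> open V) /\ (C `<=` \bigcup_(V in [set V | V \in U]) V).

Definition approximation (T : topologicalType) (op : T -> T -> T)
  (C : set T) (U : seq (set T)) (H : finType) (hop : H -> H -> H) (j : H -> T) : Prop :=
  (forall V, V \in U -> V `&` C !=set0 -> exists h : H, V (j h)) /\
  (forall x y : H, C (j x) -> C (j y) -> C (op (j x) (j y)) ->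
     exists2 V, V \in U & V (j (hop x y)) /\ V (op (j x) (j y))).

Definition approximable_by_finite_quasigroups (T : topologicalType) (op : T -> T -> T) : Prop :=
  forall (C : set T) (U : seq (set T)), compact C -> finite_open_cover C U ->
    exists (H : finType) (hop : H -> H -> H) (j : H -> T),
      is_quasigroup hop /\ injective j /\ approximation op C U hop j.

From Pilot Require Import Defs.
From mathcomp Require Import all_boot all_order all_algebra.
From mathcomp Require Import zify.
Set Implicit Arguments. Unset Strict Implicit. Unset Printing Implicit Defensive.

(* A compact subset C of a discrete space is finite. List C as the first n of
   N = 3n distinct points of T (or of all of T, if T has fewer points). The
   restriction of op to C is a partial Latin square of order N supported on
   the first n rows and columns, and such a square can be completed row by
   row, each row by a matching given by Hall's theorem: for the first n rows
   the Hall condition holds because N >= 3n, for the others because the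
   column/symbol compatibility graph is then regular. The completed square is
   a finite quasigroup that agrees with op on C. *)

Section HallMarriage.
Variables (I J : finType) (R : I -> J -> bool).
Implicit Types (A X Y : {set I}) (B : {set J}).

Definition nbh X B : {set J} := [set j in B | [exists i in X, R i j]].

Definition hall_condition A B := forall X, X \subset A -> #|X| <= #|nbh X B|.

Definition matching A B (f : I -> J) :=
  {in A &, injective f} /\ {in A, forall i, f i \in B /\ R i (f i)}.

Lemma nbhP X B j : reflect (j \in B /\ exists2 i, i \in X & R i j) (j \in nbh X B).
Proof.
rewrite inE; apply: (iffP andP) => [[jB /existsP[i /andP[iX Rij]]]|[jB [i iX Rij]]].
  by split=> //; exists i.
by split=> //; apply/existsP; exists i; rewrite iX.
Qed.

Lemma matching_glue A1 A2 B1 B2 f1 f2 : [disjoint B1 & B2] ->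
  matching A1 B1 f1 -> matching A2 B2 f2 ->
  matching (A1 :|: A2) (B1 :|: B2) (fun i => if i \in A1 then f1 i else f2 i).
Proof.
move=> dB [inj1 f1P] [inj2 f2P].
have A2P i : i \in A1 :|: A2 -> i \notin A1 -> i \in A2 by rewrite inE => /orP[->|].
have apart i i' : i \in A1 -> i' \in A2 -> f1 i != f2 i'.
  move=> iA i'A; apply/eqP => e; case: (f1P i iA) (f2P i' i'A) => f1B _ [f2B _].
  by rewrite -e (disjointFr dB f1B) in f2B.
split=> [i i' iA i'A|i iA].
  case: ifP => i1; case: ifP => i'1 e; first exact: inj1.
  - by have := apart i i' i1 (A2P i' i'A (negbT i'1)); rewrite e eqxx.
  - by have := apart i' i i'1 (A2P i iA (negbT i1)); rewrite e eqxx.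
  - by apply: inj2 e; apply: A2P; rewrite ?i1 ?i'1.
case: ifP => i1; first by case: (f1P i i1) => fB ->; rewrite inE fB.
by case: (f2P i (A2P i iA (negbT i1))) => fB ->; rewrite inE fB orbT.
Qed.

Lemma nbh_sub X B : nbh X B \subset B.
Proof. by apply/subsetP => j /nbhP[]. Qed.

Lemma matching_nbh X B f : matching X B f -> matching X (nbh X B) f.
Proof.
case=> inj fP; split=> // i iX; case: (fP i iX) => fB Rf.
by split=> //; apply/nbhP; split=> //; exists i.
Qed.

Lemma matching_subr A B B' f : B \subset B' -> matching A B f -> matching A B' f.
Proof.
move=> /subsetP sBB' [inj fP]; split=> // i iA.
by case: (fP i iA) => /sBB' fB Rf.
Qed.

Lemma hall_condition_tight A B X0 : X0 \subset A -> #|nbh X0 B| <= #|X0| ->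
  hall_condition A B -> hall_condition (A :\: X0) (B :\: nbh X0 B).
Proof.
move=> X0A tight hallA Y YA.
have /subsetDP[_ dYX0] := YA.
have YX0A : Y :|: X0 \subset A.
  by rewrite subUset X0A andbT (subset_trans YA) ?subsetDl.
have split_nbh : nbh (Y :|: X0) B \subset nbh Y (B :\: nbh X0 B) :|: nbh X0 B.
  apply/subsetP => j /nbhP[jB [i]]; rewrite inE => /orP[iY|iX0] Rij; apply/setUP.
    have [jN0|jN0] := boolP (j \in nbh X0 B); [by right|left].
    by apply/nbhP; split; [rewrite inE jN0 | exists i].
  by right; apply/nbhP; split=> //; exists i.
have := hallA _ YX0A; rewrite cardsU (disjoint_setI0 dYX0) cards0 subn0.
have := leq_trans (subset_leq_card split_nbh) (leq_card_setU _ _).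
lia.
Qed.

Lemma hall_condition_loose A B a b : a \in A -> b \in B ->
  (forall X, X \subset A -> X != set0 -> X != A -> #|X| < #|nbh X B|) ->
  hall_condition (A :\ a) (B :\ b).
Proof.
move=> aA bB loose Y YA.
have [->|[y yY]] := set_0Vmem Y; first by rewrite cards0.
have YA' : Y \subset A by rewrite (subset_trans YA) ?subsetDl.
have Y0 : Y != set0 by apply/set0Pn; exists y.
have YnA : Y != A by apply: contraTneq YA => ->; apply/subsetPn; exists a; rewrite ?inE ?eqxx.
have split_nbh : nbh Y B \subset nbh Y (B :\ b) :|: [set b].
  apply/subsetP => j /nbhP[jB [i iY Rij]]; apply/setUP.
  have [->|jb] := eqVneq j b; [by right; rewrite inE|left].
  by apply/nbhP; split; [rewrite !inE jb|exists i].
have := leq_trans (subset_leq_card split_nbh) (leq_card_setU _ _).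
have := loose Y YA' Y0 YnA; rewrite cards1; lia.
Qed.

Theorem hall_marriage (j0 : J) A B : hall_condition A B -> exists f, matching A B f.
Proof.
elim: {A}_.+1 {-2}A (ltnSn #|A|) B => // n IH A cardA B hallA.
have [->|[a aA]] := set_0Vmem A; first by exists (fun=> j0); split=> i; rewrite inE.
have A0 : A != set0 by apply/set0Pn; exists a.
case: (boolP [exists X : {set I}, [&& X \subset A, X != set0, X != A & #|nbh X B| <= #|X|]]).
  case/existsP => X0 /and4P[X0A X0_neq0 X0_neqA tight].
  have ltX0 : #|X0| < #|A| by rewrite proper_card // properEneq X0_neqA X0A.
  have ltAX0 : #|A :\: X0| < #|A| by rewrite cardsDS // ltn_subrL !card_gt0 X0_neq0.
  have [f1 /matching_nbh m1] := IH X0 (leq_trans ltX0 cardA) B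
                     (fun X XX0 => hallA X (subset_trans XX0 X0A)).
  have [f2 m2] := IH _ (leq_trans ltAX0 cardA) _ (hall_condition_tight X0A tight hallA).
  have -> : A = X0 :|: A :\: X0 by rewrite -{1}(setID A X0) (setIidPr X0A).
  exists (fun i => if i \in X0 then f1 i else f2 i).
  apply: matching_subr (matching_glue _ m1 m2).
    by rewrite subUset nbh_sub subsetDl.
  by rewrite disjoint_subset; apply/subsetP => j; rewrite !inE => ->.
move/existsPn => loose.
have [b /nbhP[bB [_ /set1P-> Rab]]] : exists b, b \in nbh [set a] B.
  by apply/set0Pn; rewrite -card_gt0 (leq_trans _ (hallA _ _)) ?cards1 ?sub1set.
have hall' : hall_condition (A :\ a) (B :\ b).
  apply: hall_condition_loose => // X XA X0 XA'.
  by have := loose X; rewrite XA X0 XA' /= -ltnNge.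
have ltAa : #|A :\ a| < #|A| by rewrite (cardsD1 a A) aA.
have [f2 m2] := IH _ (leq_trans ltAa cardA) _ hall'.
have m1 : matching [set a] [set b] (fun=> b).
  by split=> [i i' /set1P-> /set1P-> //|i /set1P->]; rewrite set11.
rewrite -(setD1K aA); exists (fun i => if i \in [set a] then b else f2 i).
apply: matching_subr (matching_glue _ m1 m2); first by rewrite subUset sub1set bB subsetDl.
by rewrite disjoints1 !inE eqxx.
Qed.

Lemma hall_condition_of_degrees A B d : 0 < d ->
  {in A, forall i, d <= #|[set j | R i j]|} -> (forall j, #|[set i | R i j]| <= d) ->
  {in A, forall i j, R i j -> j \in B} -> hall_condition A B.
Proof.
move=> d_gt0 degI degJ AB X XA; rewrite -(leq_pmul2r d_gt0).
apply: (@leq_trans (\sum_(i in X) #|[set j | R i j]|)).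
  by rewrite -sum_nat_const; apply: leq_sum => i /(subsetP XA); apply: degI.
apply: (@leq_trans (\sum_(j in nbh X B) #|[set i | R i j]|)); last first.
  by rewrite -sum_nat_const; apply: leq_sum.
under eq_bigr do rewrite -sum1dep_card.
rewrite (exchange_big_dep (mem (nbh X B))) /= => [|i j iX Rij]; last first.
  by apply/nbhP; split; [exact: AB (subsetP XA i iX) _ Rij | exists i].
apply: leq_sum => j _; rewrite sum1dep_card.
by apply: subset_leq_card; apply/subsetP => i; rewrite !inE => /andP[].
Qed.

End HallMarriage.

Section PartialLatinSquares.
Variable N : nat.
Local Notation I := 'I_N.
Implicit Types (F G : I -> I -> option I) (r c s : I).

Definition rowinj F := forall r c c', F r c = F r c' -> F r c != None -> c = c'.
Definition colinj F := forall c r r', F r c = F r' c -> F r c != None -> r = r'.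
Definition extends F G := forall r c s, F r c = Some s -> G r c = Some s.
Definition full F := forall r c, F r c != None.

Definition transpose F : I -> I -> option I := fun r c => F c r.
Definition row_cells F r := [set c | F r c != None].
Definition row_syms F r := [set s | [exists c, F r c == Some s]].
Definition col_syms F c := [set s | [exists r, F r c == Some s]].

Lemma card_set_ltn k : k <= N -> #|[set i : I | i < k]| = k.
Proof.
move=> kN; have widen_inj : injective (widen_ord kN) by move=> i j /(congr1 val) /= /val_inj.
rewrite -[RHS]card_ord -(card_imset _ widen_inj).
apply: eq_card => i; rewrite !inE; apply/idP/imsetP => [ik|[j _ ->]]; last exact: (ltn_ord j).
by exists (Ordinal ik) => //; apply: val_inj.
Qed.

Lemma card_row_syms F r : rowinj F -> #|row_syms F r| = #|row_cells F r|.
Proof.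
move=> Frow.
have -> : row_syms F r = [set odflt c (F r c) | c in row_cells F r].
  apply/setP => s; rewrite inE; apply/existsP/imsetP => [[c /eqP e]|[c]].
    by exists c; rewrite ?inE e.
  by rewrite inE; case e: (F r c) => [s'|] //= _ ->; exists c; rewrite e.
apply: card_in_imset => c c'; rewrite !inE.
case e: (F r c) => [s|] //; case e': (F r c') => [s'|] //= _ _ ss'.
by apply: (Frow r); rewrite ?e ?e' ?ss'.
Qed.

Lemma card_col_syms F c : colinj F -> #|col_syms F c| = #|[set r | F r c != None]|.
Proof. exact (@card_row_syms (transpose F) c). Qed.

Lemma card_cols_with_sym F s : rowinj F -> colinj F ->
  #|[set c | s \in col_syms F c]| = #|[set r | s \in row_syms F r]|.
Proof.
move=> Frow Fcol; pose P := [set rc : I * I | F rc.1 rc.2 == Some s].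
have -> : [set c | s \in col_syms F c] = snd @: P.
  apply/setP => c; rewrite !inE; apply/existsP/imsetP => [[r e]|[[r c'] /= e ->]].
    by exists (r, c); rewrite ?inE.
  by exists r; rewrite inE in e.
have -> : [set r | s \in row_syms F r] = fst @: P.
  apply/setP => r; rewrite !inE; apply/existsP/imsetP => [[c e]|[[r' c] /= e ->]].
    by exists (r, c); rewrite ?inE.
  by exists c; rewrite inE in e.
rewrite !card_in_imset // => -[r c] [r' c']; rewrite !inE /= => /eqP e /eqP e' eq.
  by rewrite -eq in e' *; rewrite (Frow r c c') ?e ?e'.
by rewrite -eq in e' *; rewrite (Fcol c r r') ?e ?e'.
Qed.

Lemma row_syms_full F r : rowinj F -> (forall c, F r c != None) -> row_syms F r = setT.
Proof.
move=> Frow Fr; apply/eqP; rewrite eqEcard subsetT cardsT card_row_syms //.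
by rewrite -cardsT; apply: subset_leq_card; apply/subsetP => c; rewrite !inE Fr.
Qed.

Definition col_free F c s := s \notin col_syms F c.

Definition row_hall F r := hall_condition (col_free F) (~: row_cells F r) (~: row_syms F r).

Definition set_row F r (g : I -> I) : I -> I -> option I :=
  fun r' c => if r' == r then Some (g c) else F r' c.

Lemma set_row_partial_latin F r g : rowinj F -> colinj F -> injective g ->
  (forall c s, F r c = Some s -> g c = s) -> (forall r' c, r' != r -> F r' c != Some (g c)) ->
  [/\ rowinj (set_row F r g), colinj (set_row F r g) & extends F (set_row F r g)].
Proof.
move=> Frow Fcol ginj gF gnew; rewrite /set_row; split.
- move=> r' c c'; case: eqP => _; first by move=> [/ginj].
  exact: Frow.
- move=> c r1 r2; case: eqP => [->|r1r]; case: eqP => [->|r2r] //.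
  + by move=> e; have := gnew r2 c (introN eqP r2r); rewrite e eqxx.
  + by move=> e; have := gnew r1 c (introN eqP r1r); rewrite -e eqxx.
  + exact: Fcol.
- by move=> r' c s e; case: eqP => [er|//]; rewrite er in e; rewrite (gF c s e).
Qed.

Lemma fill_row F r : rowinj F -> colinj F -> row_hall F r ->
  exists g : I -> I, [/\ injective g, forall c s, F r c = Some s -> g c = s
                   & forall r' c, r' != r -> F r' c != Some (g c)].
Proof.
move=> Frow Fcol /(hall_marriage r)[f [finj fP]].
have fnew c : F r c = None -> f c \notin row_syms F r /\ f c \notin col_syms F c.
  move=> e; have cE : c \in ~: row_cells F r by rewrite !inE e.
  by have [] := fP c cE; rewrite inE.
exists (fun c => if F r c is Some s then s else f c); split => [c c'||r' c r'r] /=.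
- case e: (F r c) => [s|]; case e': (F r c') => [s'|] ss'.
  + by apply: (Frow r); rewrite ?e ?e' ?ss'.
  + by case: (fnew c' e') => /negP[]; rewrite inE; apply/existsP; exists c; rewrite e ss'.
  + by case: (fnew c e) => /negP[]; rewrite inE; apply/existsP; exists c'; rewrite e' ss'.
  + by apply: finj ss'; rewrite !inE ?e ?e'.
- by move=> c s ->.
- case e: (F r c) => [s|].
    by apply: contra_neq r'r => e'; apply: (Fcol c); rewrite ?e ?e'.
  case: (fnew c e) => _; apply: contra => /eqP e'.
  by rewrite inE; apply/existsP; exists r'; rewrite e'.
Qed.

Lemma row_hall_after_full_rows F r : rowinj F -> colinj F ->
  (forall r' c, r' < r -> F r' c != None) -> (forall r' c, r <= r' -> F r' c = None) ->
  row_hall F r.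
Proof.
(* The compatibility graph between columns and symbols is (N - r)-regular. *)
move=> Frow Fcol full_below empty_above.
have rN : r <= N by apply: ltnW.
have filled_rows c : [set r' | F r' c != None] = [set r' : I | r' < r].
  apply/setP => r'; rewrite !inE; case: ltnP => [/full_below -> //|/empty_above -> //].
have rows_with s : [set r' | s \in row_syms F r'] = [set r' : I | r' < r].
  apply/setP => r'; rewrite inE [in RHS]inE; case: ltnP => [lt|ge].
    by rewrite row_syms_full ?inE // => c; apply: full_below.
  by rewrite inE; apply/existsP => -[c]; rewrite empty_above.
apply: (hall_condition_of_degrees (d := N - r)) => [|c _|s|c _ s _].
- by rewrite subn_gt0.
- have -> : [set s | col_free F c s] = ~: col_syms F c.
    by apply/setP => s; rewrite !inE /col_free !inE.
  by rewrite cardsCs setCK card_ord card_col_syms // filled_rows card_set_ltn.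
- have -> : [set c | col_free F c s] = ~: [set c | s \in col_syms F c].
    by apply/setP => c'; rewrite !inE /col_free !inE.
  by rewrite cardsCs setCK card_ord card_cols_with_sym // rows_with card_set_ltn.
- by rewrite !inE; apply/existsP => -[c']; rewrite empty_above.
Qed.

Lemma row_hall_sparse F r n : rowinj F -> colinj F -> 3 * n <= N ->
  (forall r' c, F r' c != None -> r' < n) -> (forall c, F r c != None -> c < n) ->
  row_hall F r.
Proof.
(* A nonempty X sees every missing symbol except the at most n used in one of
   its columns; when |X| > n it sees all of them, as a symbol fills at most n
   columns. *)
move=> Frow Fcol n3 rows_lt cols_lt X XE.
set S := ~: row_syms F r.
have nN : n <= N by lia.
have cardS : #|S| = #|~: row_cells F r|.
  by rewrite [LHS]cardsCs [RHS]cardsCs !setCK card_row_syms.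
have cells_le : #|row_cells F r| <= n.
  rewrite -(card_set_ltn nN); apply: subset_leq_card.
  by apply/subsetP => c; rewrite !inE => /cols_lt.
have col_le c : #|col_syms F c| <= n.
  rewrite card_col_syms // -(card_set_ltn nN); apply: subset_leq_card.
  by apply/subsetP => r'; rewrite !inE => /rows_lt.
have sym_cols_le s : #|[set c | s \in col_syms F c]| <= n.
  rewrite card_cols_with_sym // -(card_set_ltn nN); apply: subset_leq_card.
  by apply/subsetP => r'; rewrite !inE => /existsP[c /eqP e]; apply: (rows_lt r' c); rewrite e.
have [smallX|largeX] := leqP #|X| n.
  have [->|[c0 c0X]] := set_0Vmem X; first by rewrite cards0.
  have sub : S :\: col_syms F c0 \subset nbh (col_free F) X S.
    by apply/subsetP => s; rewrite inE => /andP[sc0 sS]; apply/nbhP; split=> //; exists c0.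
  have := leq_trans (subset_leq_card (subsetIr S (col_syms F c0))) (col_le c0).
  have := subset_leq_card sub; rewrite cardsD.
  have := cardsC (row_cells F r); rewrite -cardS card_ord; lia.
have sub : S \subset nbh (col_free F) X S.
  apply/subsetP => s sS; apply/nbhP; split=> //.
  have /exists_inP[c cX cs] : [exists c in X, s \notin col_syms F c].
    apply: contraLR largeX => /exists_inPn all.
    rewrite -leqNgt (leq_trans _ (sym_cols_le s)) //; apply: subset_leq_card.
    by apply/subsetP => c cX; rewrite inE; have := all c cX; rewrite negbK.
  by exists c.
by rewrite (leq_trans (subset_leq_card XE)) // -cardS subset_leq_card.
Qed.

Lemma latin_completion F n : rowinj F -> colinj F -> 3 * n <= N ->
  (forall r c, F r c != None -> r < n /\ c < n) ->
  exists G, [/\ rowinj G, colinj G, extends F G & full G].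
Proof.
move=> Frow Fcol n3 Fsupp.
have fill_below k : k <= N -> exists G, [/\ rowinj G, colinj G, extends F G,
    forall r c, r < k -> G r c != None & forall r, k <= r -> G r =1 F r].
  elim: k => [|k IH] kN; first by exists F; split.
  have [G [Grow Gcol FG Gfull Grest]] := IH (ltnW kN).
  pose r : I := Ordinal kN.
  have hall_r : row_hall G r.
    have [nk|kn] := leqP n k.
      apply: row_hall_after_full_rows => // r' c kr'.
      rewrite Grest //; apply/eqP; apply: contraTT kr' => /Fsupp[r'n _].
      by rewrite -ltnNge (leq_trans r'n nk).
    apply: (row_hall_sparse (r := r) Grow Gcol n3) => [r' c|c].
      case: (ltnP r' k) => [r'k _|kr']; first exact: ltn_trans kn.
      by rewrite Grest // => /Fsupp[].
    by rewrite Grest // => /Fsupp[].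
  have [g [ginj gG gnew]] := fill_row Grow Gcol hall_r.
  have [G'row G'col GG'] := set_row_partial_latin Grow Gcol ginj gG gnew.
  exists (set_row G r g); split=> // [r' c s /FG/GG'//|r' c|r' kr' c]; rewrite /set_row.
    case: (eqVneq r' r) => // r'r; rewrite ltnS leq_eqVlt => /orP[r'k|/Gfull //].
    by case/eqP: r'r; apply: val_inj; apply/eqP.
  case: (eqVneq r' r) => [r'r|_]; first by rewrite r'r ltnn in kr'.
  by apply: Grest; apply: ltnW.
have [G [Grow Gcol FG Gfull _]] := fill_below N (leqnn N).
by exists G; split=> // r c; apply: Gfull.
Qed.

Lemma latin_of_full G : rowinj G -> colinj G -> full G ->
  let L r c := odflt r (G r c) in
  [/\ forall r, injective (L r), forall c, injective (L^~ c)
    & forall r c, G r c = Some (L r c)].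
Proof.
move=> Grow Gcol Gfull L.
have GL r c : G r c = Some (L r c) by rewrite /L; case: (G r c) (Gfull r c).
split=> [r c c'|c r r'|//] e; [apply: (Grow r) | apply: (Gcol c)]; by rewrite ?GL ?e.
Qed.

End PartialLatinSquares.

Lemma latin_quasigroup (H : finType) (L : H -> H -> H) :
  (forall x, injective (L x)) -> (forall y, injective (L^~ y)) -> is_quasigroup L.
Proof.
move=> Lrow Lcol a b; split.
  have [g gK Kg] := injF_bij (Lrow a).
  by exists (g b); split=> [|x <-]; [apply: Kg | apply: gK].
have [g gK Kg] := injF_bij (Lcol a).
by exists (g b); split=> [|x <-]; [apply: Kg | apply: gK].
Qed.

Section QuasigroupTable.
Variables (T : eqType) (op : T -> T -> T).
Hypothesis op_quasi : is_quasigroup op.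

Lemma quasigroup_lcancel a : injective (op a).
Proof.
move=> x y e; have [[z [_ zU]] _] := op_quasi a (op a x).
by rewrite -(zU x erefl) (zU y (esym e)).
Qed.

Lemma quasigroup_rcancel a : injective (op^~ a).
Proof.
move=> x y e; have [_ [z [_ zU]]] := op_quasi a (op x a).
by rewrite -(zU x erefl) (zU y (esym e)).
Qed.

Variables (N n : nat) (j : 'I_N -> T).
Hypothesis j_inj : injective j.
Implicit Types x y l : 'I_N.

Definition op_table (x y : 'I_N) : option 'I_N :=
  if (x < n) && (y < n) then [pick l : 'I_N | (l < n) && (j l == op (j x) (j y))] else None.

Lemma op_tableP x y l : op_table x y = Some l -> j l = op (j x) (j y).
Proof.
rewrite /op_table; case: ifP => // _.
by case: pickP => // l' /andP[_ /eqP e] [<-].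
Qed.

Lemma op_tableE x y l : x < n -> y < n -> l < n -> j l = op (j x) (j y) ->
  op_table x y = Some l.
Proof.
move=> xn yn ln e; rewrite /op_table xn yn /=.
case: pickP => [l' /andP[_ /eqP e'] | /(_ l)]; last by rewrite ln e eqxx.
by congr Some; apply: j_inj; rewrite e e'.
Qed.

Lemma op_table_rowinj : rowinj op_table.
Proof.
move=> x y y'; case e: (op_table x y) => [l|] // e' _.
move: (op_tableP e) (op_tableP (esym e')) => -> /quasigroup_lcancel; exact: j_inj.
Qed.

Lemma op_table_colinj : colinj op_table.
Proof.
move=> y x x'; case e: (op_table x y) => [l|] // e' _.
move: (op_tableP e) (op_tableP (esym e')) => -> /quasigroup_rcancel; exact: j_inj.
Qed.

Lemma op_table_support x y : op_table x y != None -> x < n /\ y < n.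
Proof. by rewrite /op_table; case: (x < n); case: (y < n). Qed.

Lemma op_table_full : n = N -> (forall t, exists l, j l = t) -> full op_table.
Proof.
move=> nN j_surj x y; have [l jl] := j_surj (op (j x) (j y)).
by rewrite (op_tableE (l := l)) ?nN.
Qed.

Lemma quasigroup_extending_table : 3 * n <= N \/ n = N /\ (forall t, exists l, j l = t) ->
  exists L : 'I_N -> 'I_N -> 'I_N, is_quasigroup L /\
    forall x y l, x < n -> y < n -> l < n -> j l = op (j x) (j y) -> L x y = l.
Proof.
move=> size_ok.
have [G [Grow Gcol tableG Gfull]] :
    exists G, [/\ rowinj G, colinj G, extends op_table G & full G].
  case: size_ok => [n3|[nN j_surj]]; last first.
    exists op_table; split=> //; first exact: op_table_rowinj.
      exact: op_table_colinj.
    exact: op_table_full.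
  exact: latin_completion op_table_rowinj op_table_colinj n3 op_table_support.
have [Lrow Lcol GL] := latin_of_full Grow Gcol Gfull.
eexists; split; first exact: latin_quasigroup Lrow Lcol.
move=> x y l xn yn ln e; have := tableG x y l (op_tableE xn yn ln e).
by rewrite GL => -[].
Qed.

End QuasigroupTable.

(* Imported only now: its set-theoretic names (set0, inE, subsetP, ...)
   shadow those of finset used above. *)
From mathcomp Require Import all_classical all_reals all_analysis.
Local Open Scope classical_set_scope.

Lemma extend_uniq (T : eqType) (s : seq T) k : uniq s ->
  (exists2 t, uniq (s ++ t) & size t = k) \/ exists2 v : seq T, uniq v & forall x, x \in v.
Proof.
move=> s_uniq; elim: k => [|k [[t st_uniq t_size]|enum]]; last by right.
  by left; exists [::]; rewrite ?cats0.
have [[x xst]|all_in] := pselect (exists x, x \notin s ++ t).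
  by left; exists (rcons t x); rewrite ?size_rcons ?t_size // -rcons_cat rcons_uniq xst.
by right; exists (s ++ t) => // x; apply/negPn/negP => xst; apply: all_in; exists x.
Qed.

Lemma padded_enumeration (T : eqType) (s : seq T) : uniq s -> exists u n,
  [/\ uniq u, n <= size u, {in s, forall x, index x u < n}
    & 3 * n <= size u \/ n = size u /\ forall x, x \in u].
Proof.
move=> s_uniq; have [[t st_uniq t_size]|[v v_uniq v_all]] := extend_uniq (2 * size s) s_uniq.
  exists (s ++ t), (size s); split=> // [|x xs|]; first by rewrite size_cat leq_addr.
    by rewrite index_cat xs index_mem.
  by left; rewrite size_cat t_size mulSn.
by exists v, (size v); split=> // [x _|]; [rewrite index_mem | right].
Qed.

Lemma finite_quasigroup_embedding (T : eqType) (op : T -> T -> T) (C : set T) :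
  is_quasigroup op -> finite_set C ->
  exists N (L : 'I_N -> 'I_N -> 'I_N) (j : 'I_N -> T),
    [/\ is_quasigroup L, injective j, C `<=` range j &
        forall x y, C (j x) -> C (j y) -> C (op (j x) (j y)) -> j (L x y) = op (j x) (j y)].
Proof.
move=> op_quasi /finite_seqP[s0 C_s0].
have [u [n [u_uniq n_le s_index size_ok]]] := padded_enumeration (undup_uniq s0).
pose j := tnth (in_tuple u).
have j_inj : injective j by apply/tuple_uniqP.
have index_j i : index (j i) u = i by rewrite /j (tnth_nth (j i)) index_uniq.
have j_onto x : x \in u -> exists l, j l = x.
  move=> xu; have xu' : index x u < size u by rewrite index_mem.
  by exists (Ordinal xu'); rewrite /j (tnth_nth x) nth_index.
have C_index x : C x -> index x u < n by rewrite C_s0 /= -mem_undup => /s_index.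
have C_u x : C x -> x \in u by move/C_index/leq_trans/(_ n_le); rewrite index_mem.
have j_size_ok : 3 * n <= size u \/ n = size u /\ forall t, exists l, j l = t.
  case: size_ok => [|[nN u_all]]; first by left.
  by right; split=> // t; exact: j_onto.
have [L [L_quasi L_table]] := quasigroup_extending_table op_quasi j_inj j_size_ok.
exists (size u), L, j; split=> // [x /C_u/j_onto[l jl]|x y Cx Cy Cxy]; first by exists l.
have [l jl] := j_onto _ (C_u _ Cxy).
by rewrite (L_table x y l) // -index_j C_index ?jl.
Qed.

Lemma discrete_compact_finite (T : discreteTopologicalType) (C : set T) :
  compact C -> finite_set C.
Proof.
move=> C_compact; apply: contrapT => C_infinite.
pose F (B : set T) := finite_set (C `\` B).
have F_filter : Filter F.
  split=> [|A B FA FB|A B AB]; first by rewrite /F setDT.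
    by rewrite /F setDIr finite_setU.
  by apply: sub_finite_set => x [Cx nAx]; split=> // /AB.
have F_proper : ProperFilter F by apply: Build_ProperFilter; rewrite /F setD0.
have FC : F C by rewrite /F setDv.
have [p [Cp p_cluster]] := C_compact F F_proper FC.
have F_punctured : F (C `\` [set p]).
  by rewrite /F setDD; apply: sub_finite_set (finite_set1 p) => x [].
have [x [[_ xp] /= xp']] := p_cluster _ _ F_punctured (discrete_set1 p).
exact: xp xp'.
Qed.

Lemma approximation_of_embedding (T : topologicalType) (op : T -> T -> T) (C : set T)
    (U : seq (set T)) (H : finType) (hop : H -> H -> H) (j : H -> T) :
  finite_open_cover C U -> C `<=` range j ->
  (forall x y, C (j x) -> C (j y) -> C (op (j x) (j y)) -> j (hop x y) = op (j x) (j y)) ->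
  Defs.approximation op C U hop j. (* all_analysis has its own approximation *)
Proof.
move=> [_ C_cover] C_range j_hom; split=> [V _ [c [Vc Cc]]|x y Cx Cy Cxy].
  by have [h _ hc] := C_range c Cc; exists h; rewrite hc.
have [V UV Vxy] := C_cover _ Cxy.
by exists V; rewrite ?j_hom.
Qed.

Theorem proposition4 (T : discreteTopologicalType) (op : T -> T -> T) :
  is_quasigroup op -> approximable_by_finite_quasigroups op.
Proof.
move=> op_quasi C U /discrete_compact_finite C_fin U_cover.
have [N [L [j [L_quasi j_inj C_range j_hom]]]] := finite_quasigroup_embedding op_quasi C_fin.
exists 'I_N, L, j; split=> //; split=> //.
exact: approximation_of_embedding.
Qed.
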